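(* Let $t\ge2$, $\sigma\in S_t$, and let $p=\mathrm{red}(\sigma_1\cdots\sigma_{t-1})\in S_{t-1}$. Let $\vec v\in\mathbb{N}^{t}$ be the vector with $v_{\sigma_t}=1$ and $v_i=0$ for $i\ne\sigma_t$. Then $\vec v$ is a gap vector for the prefix $p$ with respect to $\{(\sigma,[t-2])\}$, and the set $\{1\}$ is reversibly deletable for $p$ with respect to $\{(\sigma,[t-2])\}$.
   Context: $\mathrm{red}(w)$ replaces the $i$-th smallest letter of a word of distinct integers by $i$. A vincular pattern $(\sigma,X)$, $\sigma\in S_\ell$, $X\subseteq[\ell-1]$, is contained in $\pi$ if there are $i_1<\dots<i_\ell$ with $\mathrm{red}(\pi_{i_1}\cdots\pi_{i_\ell})=\sigma$ and $i_{x+1}=i_x+1$ for $x\in X$; $(\sigma,[t-2])$ is the pattern $\sigma_1\cdots\sigma_{t-1}\text{-}\sigma_t$. For $p\in S_k$ and $w\in[n]^k$ with distinct letters and $\mathrm{red}(w)=p$, $S_n^B(p;w)$ is the set of $B$-avoiding $\pi\in S_n$ with $\pi_i=w_i$ ($i\le k$). The spacing vector $\vec g(n,w)\in\mathbb{N}^{k+1}$ has $i$-th component $c_i-c_{i-1}-1$, with $c_i$ the $i$-th smallest letter of $w$, $c_0=0$, $c_{k+1}=n+1$. $\vec v$ is a gap vector for $p$ w.r.t. $B$ if $S_n^B(p;w)=\emptyset$ for all $n$ and all such $w$ with $\vec g(n,w)\ge\vec v$ componentwise. $d_R$ deletes entries in positions $R$ and reduces (for words: subtract from each remaining letter the number of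 deleted letters smaller than it). $R$ is reversibly deletable for $p$ w.r.t. $B$ if for all $n$ and all such $w$ with $S_n^B(p;w)\ne\emptyset$, $d_R$ is a bijection $S_n^B(p;w)\to S_{n-|R|}^B(d_R(p);d_R(w))$. *)

(* Permutations and words are seq nat with letters 1..n;
   positions in the paper are 1-indexed. *)
From mathcomp Require Import all_boot.
Set Implicit Arguments. Unset Strict Implicit. Unset Printing Implicit Defensive.

Definition red (w : seq nat) : seq nat :=
  [seq (count (fun y => y < x) w).+1 | x <- w].

Definition is_perm (n : nat) (s : seq nat) : bool := perm_eq s (iota 1 n).

(* vincular pattern (sigma, X), X a list of elements of [l-1] (1-indexed) *)
Definition vpattern := (seq nat * seq nat)%type.

(* I = [i_1; ...; i_l] : 0-indexed positions in pi (i_j 0-indexed).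
   The adjacency i_{x+1} = i_x + 1 for 1-indexed x is nth I x = (nth I (x-1)).+1 *)
Definition occurrence (pi : seq nat) (P : vpattern) (I : seq nat) : bool :=
  [&& sorted ltn I, all (fun i => i < size pi) I,
      red [seq nth 0 pi i | i <- I] == P.1 &
      all (fun x => (0 < x < size I) && (nth 0 I x == (nth 0 I x.-1).+1)) P.2].

Definition contains (pi : seq nat) (P : vpattern) : Prop :=
  exists I, occurrence pi P I.

Definition avoids (B : seq vpattern) (pi : seq nat) : Prop :=
  forall P, P \in B -> ~ contains pi P.

Definition SB (n : nat) (B : seq vpattern) (w pi : seq nat) : Prop :=
  [/\ is_perm n pi, avoids B pi & take (size w) pi = w].

Definition prefix_ok (n : nat) (p w : seq nat) : bool :=
  [&& size w == size p, uniq w, all (fun x => 0 < x <= n) w & red w == p].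

Definition spacing (n : nat) (w : seq nat) : seq nat :=
  let c := 0 :: sort leq w ++ [:: n.+1] in
  [seq nth 0 c i.+1 - nth 0 c i - 1 | i <- iota 0 (size w).+1].

Definition vec_ge (g v : seq nat) : bool := all2 (fun a b => b <= a) g v.

Definition gap_vector (B : seq vpattern) (p v : seq nat) : Prop :=
  size v = (size p).+1 /\
  forall n w, prefix_ok n p w -> vec_ge (spacing n w) v ->
    forall pi, ~ SB n B w pi.

Definition dR (R : seq nat) (s : seq nat) : seq nat :=
  let del := mask [seq i \in R | i <- iota 1 (size s)] s in
  let kept := mask [seq i \notin R | i <- iota 1 (size s)] s in
  [seq x - count (fun y => y < x) del | x <- kept].

(* R (a duplicate-free list of positions, |R| = size R) is reversibly deletable *)
Definition reversibly_deletable (B : seq vpattern) (p R : seq nat) : Prop :=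
  uniq R /\
  forall n w, prefix_ok n p w -> (exists pi, SB n B w pi) ->
    [/\ (forall pi, SB n B w pi -> SB (n - size R) B (dR R w) (dR R pi)),
        (forall pi1 pi2, SB n B w pi1 -> SB n B w pi2 ->
            dR R pi1 = dR R pi2 -> pi1 = pi2) &
        (forall pi', SB (n - size R) B (dR R w) pi' ->
            exists pi, SB n B w pi /\ dR R pi = pi')].

From mathcomp Require Import all_boot.
From mathcomp Require Import zify.

Set Implicit Arguments.
Unset Strict Implicit.
Unset Printing Implicit Defensive.

(* An occurrence of P in a permutation pi
   whose prefix w is a copy of p either starts at position 1 (a head
   occurrence) or avoids position 1 altogether.  A head occurrence consists
   of w followed by a later letter y, and red(w y) = sigma holds as soon as
   y has sigma_t - 1 letters of w below it.
   - Gap vector: if the gap of g(n,w) just below the sigma_t-th smallest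
     letter of w is nonempty, a missing letter y there produces a head
     occurrence, so no such pi avoids P.
   - Reversible deletion of position 1: if some pi with prefix w avoids P,
     no letter completes w to a copy of sigma, hence no permutation with
     prefix w has a head occurrence; deleting the first letter then
     preserves avoidance in both directions (occurrences just shift by one),
     and re-inserting the first letter inverts the deletion. *)

Lemma red_size (u : seq nat) : size (red u) = size u.
Proof. by rewrite /red size_map. Qed.

Lemma count_rcons (a : pred nat) (s : seq nat) (x : nat) :
  count a (rcons s x) = count a s + a x.
Proof. by rewrite -cats1 count_cat /= addn0. Qed.

Lemma red_rcons (u : seq nat) (z : nat) : red (rcons u z) =
  rcons [seq (count (fun y => y < x) u + (z < x)).+1 | x <- u]
        (count (fun y => y < z) u).+1.
Proof.
rewrite /red map_rcons count_rcons ltnn addn0; congr rcons.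
by apply: eq_map => x; rewrite count_rcons.
Qed.

Lemma ltn_count (u : seq nat) (z x : nat) : x \in u -> x != z ->
  (z < x) = (count (fun y => y < z) u <= count (fun y => y < x) u).
Proof.
move=> xu xz; case: (ltngtP z x) => [zx|xz'|e]; last by rewrite e eqxx in xz.
- by symmetry; apply/idP; apply: sub_count => y /= yz; lia.
- symmetry; apply/negbTE; rewrite -ltnNge.
  have below_z : count (fun y => y < x) u + count (pred1 x) u <= count (fun y => y < z) u.
    rewrite -(count_predUI (fun y => y < x) (pred1 x)).
    have -> : count (predI (fun y => y < x) (pred1 x)) u = 0.
      by apply/eqP; rewrite -leqn0 leqNgt -has_count; apply/hasP => -[y _ /= /andP[h /eqP e]]; lia.
    by rewrite addn0; apply: sub_count => y /= /orP[|/eqP]; lia.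
  have x_occurs : 0 < count (pred1 x) u by rewrite -has_count has_pred1.
  lia.
Qed.

Lemma red_rcons_eq (u1 u2 : seq nat) (z1 z2 : nat) :
  red u1 = red u2 -> z1 \notin u1 -> z2 \notin u2 ->
  count (fun y => y < z1) u1 = count (fun y => y < z2) u2 ->
  red (rcons u1 z1) = red (rcons u2 z2).
Proof.
move=> hr n1 n2 hc; rewrite !red_rcons hc; congr rcons.
have hs : size u1 = size u2 by rewrite -red_size hr red_size.
apply: (@eq_from_nth _ 0); first by rewrite !size_map.
move=> i; rewrite size_map => hi.
have hi2 : i < size u2 by rewrite -hs.
rewrite !(nth_map 0) //.
have := congr1 (fun s => nth 0 s i) hr; rewrite /red !(nth_map 0) // => -[ec].
rewrite ec; congr (_ + _).+1.
have m1 := mem_nth 0 hi; have m2 := mem_nth 0 hi2.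
rewrite (ltn_count (z:=z1) m1) ?(ltn_count (z:=z2) m2) ?hc ?ec //.
- by apply/eqP => e; rewrite -e m2 in n2.
- by apply/eqP => e; rewrite -e m1 in n1.
Qed.

Lemma red_map_mono (f : nat -> nat) (u : seq nat) :
  {in u &, forall a b, (f a < f b) = (a < b)} -> red (map f u) = red u.
Proof.
move=> h; rewrite /red -map_comp; apply/eq_in_map => x xu /=.
by rewrite count_map; congr S; apply: eq_in_count => y yu /=; rewrite h.
Qed.

Lemma is_permP (n : nat) (s : seq nat) :
  is_perm n s <-> [/\ uniq s, size s = n & forall y, (y \in s) = (0 < y <= n)].
Proof.
split=> [hp|[us ss hs]].
- split; first by rewrite (perm_uniq hp) iota_uniq.
  + by rewrite (perm_size hp) size_iota.
  + by move=> y; rewrite (perm_mem hp) mem_iota; lia.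
- apply: uniq_perm => //; first exact: iota_uniq.
  move=> y; rewrite hs mem_iota; lia.
Qed.

Lemma count_ltn_perm (n x : nat) (s : seq nat) : is_perm n s -> 0 < x <= n.+1 ->
  count (fun y => y < x) s = x.-1.
Proof.
have count_iota a m : count (fun y => y < x) (iota a m) = minn m (x - a).
  by elim: m a => [|m IH] a /=; [rewrite min0n | rewrite IH; case: (ltnP a x) => /=; lia].
by move=> /permP -> hx; rewrite count_iota; lia.
Qed.

Lemma red_perm (n : nat) (s : seq nat) : is_perm n s -> red s = s.
Proof.
move=> hp; rewrite /red -[in RHS](map_id s); apply/eq_in_map => x xs.
have : x \in iota 1 n by rewrite -(perm_mem hp).
by rewrite mem_iota => hx; rewrite (count_ltn_perm hp); lia.
Qed.

Lemma letter_after_prefix (n k y : nat) (pi : seq nat) : is_perm n pi ->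
  (exists2 j, k <= j < size pi & nth 0 pi j = y) <->
  (0 < y <= n) && (y \notin take k pi).
Proof.
case/is_permP=> upi _ mem_pi.
split=> [[j /andP[kj jp] <-]|/andP[hy yw]].
- by rewrite -mem_pi mem_nth //= (in_take _ (mem_nth 0 jp)) index_uniq // -leqNgt.
- have yp : y \in pi by rewrite mem_pi.
  exists (index y pi); rewrite ?nth_index // index_mem yp andbT.
  by rewrite leqNgt -(in_take k yp).
Qed.

(* Occurrences of a pattern (s, [k-1]): the first k entries of s must sit at
   consecutive positions, the last one anywhere later.  A head occurrence is
   one through the first position of pi (index 0 of I); it is then made of the
   prefix of length k of pi followed by one later letter. *)

Lemma head_occurrence_of_letter (k j : nat) (s pi : seq nat) : 0 < k ->
  k <= j < size pi -> red (rcons (take k pi) (nth 0 pi j)) = s ->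
  occurrence pi (s, iota 1 k.-1) (rcons (iota 0 k) j).
Proof.
move=> k0 /andP[kj jp] hr; rewrite /occurrence /=; apply/and4P; split.
- case: k k0 kj {hr} => // k _ kj /=; rewrite rcons_path.
  have /= -> := iota_ltn_sorted 0 k.+1.
  have -> : last 0 (iota 1 k) = k.
    by rewrite (last_nth 0) size_iota -/(iota 0 k.+1) nth_iota.
  by [].
- rewrite all_rcons jp /=; apply/allP => i; rewrite mem_iota; lia.
- by rewrite map_rcons map_nth_iota0 ?hr //; lia.
- apply/allP => x; rewrite mem_iota => hx; rewrite size_rcons size_iota.
  rewrite !nth_rcons !size_iota !nth_iota; try lia.
  have -> : x < k by lia. have -> : x.-1 < k by lia.
  apply/andP; split; first lia. apply/eqP; lia.
Qed.

Lemma letter_of_head_occurrence (k : nat) (s pi I : seq nat) : 0 < k ->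
  size s = k.+1 -> occurrence pi (s, iota 1 k.-1) I -> nth 0 I 0 = 0 ->
  exists2 j, k <= j < size pi & red (rcons (take k pi) (nth 0 pi j)) = s.
Proof.
move=> k0 hs /and4P[so al /eqP rd /allP adj] h0; simpl in rd, adj.
have sI : size I = k.+1 by rewrite -hs -rd red_size size_map.
have I_prefix x : x < k -> nth 0 I x = x.
  elim: x => [|x IH] hx //.
  have := adj x.+1; rewrite mem_iota => /(_ ltac:(lia)) /andP[_ /eqP ->].
  by rewrite IH //; lia.
have kj : k <= nth 0 I k.
  have := sorted_ltn_nth ltn_trans 0 so k.-1 k; rewrite !inE sI I_prefix; last lia.
  by move=> /(_ ltac:(lia) ltac:(lia) ltac:(lia)); lia.
have jp : nth 0 I k < size pi by apply: (allP al); apply: mem_nth; rewrite sI.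
exists (nth 0 I k); first by apply/andP.
rewrite -rd; congr red.
have st : size (take k pi) = k by rewrite size_takel //; lia.
apply: (@eq_from_nth _ 0); first by rewrite size_rcons size_map st sI.
move=> i; rewrite size_rcons st => hi.
rewrite (nth_map 0) ?sI // nth_rcons st.
case: (ltngtP i k) => h; first by rewrite nth_take // I_prefix.
- lia.
- by rewrite h.
Qed.

Lemma head_occurrenceP (n k : nat) (s pi : seq nat) : 0 < k -> size s = k.+1 ->
  is_perm n pi ->
  (exists2 I, occurrence pi (s, iota 1 k.-1) I & nth 0 I 0 = 0) <->
  (exists y, [/\ 0 < y <= n, y \notin take k pi & red (rcons (take k pi) y) = s]).
Proof.
move=> k0 hs hp; split=> [[I oc h0]|[y [hy yw hr]]].
- have [j kj hr] := letter_of_head_occurrence k0 hs oc h0.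
  have /andP[hy yw] : (0 < nth 0 pi j <= n) && (nth 0 pi j \notin take k pi).
    by apply/(letter_after_prefix k _ hp); exists j.
  by exists (nth 0 pi j).
- have [j kj ej] : exists2 j, k <= j < size pi & nth 0 pi j = y.
    by apply/(letter_after_prefix k _ hp); rewrite hy.
  exists (rcons (iota 0 k) j); first by apply: head_occurrence_of_letter; rewrite ?ej.
  by rewrite nth_rcons size_iota k0 nth_iota.
Qed.

Definition del_letter (x : nat) (s : seq nat) : seq nat := [seq y - (x < y) | y <- s].
Definition ins_letter (x : nat) (s : seq nat) : seq nat := [seq y + (x <= y) | y <- s].

Lemma dR_first (x : nat) (s : seq nat) : dR [:: 1] (x :: s) = del_letter x s.
Proof.
have in1 a m : 1 < a -> [seq i \in [:: 1] | i <- iota a m] = nseq m false.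
  by elim: m a => [|m IH] a ha //=; rewrite IH ?inE; [case: eqP => //; lia | lia].
have notin1 a m : 1 < a -> [seq i \notin [:: 1] | i <- iota a m] = nseq m true.
  by elim: m a => [|m IH] a ha //=; rewrite IH ?inE; [case: eqP => //; lia | lia].
rewrite /dR /= in1 // notin1 // mask_false mask_true //=.
by apply: eq_map => y; rewrite addn0.
Qed.

Lemma del_insK (x : nat) : cancel (ins_letter x) (del_letter x).
Proof.
move=> s; rewrite /del_letter -map_comp -[RHS]map_id; apply: eq_map => y /=.
by case: (leqP x y) => /=; lia.
Qed.

Lemma ins_delK (x : nat) (s : seq nat) : x \notin s -> ins_letter x (del_letter x s) = s.
Proof.
move=> xs; rewrite /ins_letter -map_comp; apply: map_id_in => y ys /=.
have /eqP ne : y != x by apply: contraNneq xs => <-.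
by case: (ltnP x y) => /=; lia.
Qed.

Lemma del_letter_perm (n x : nat) (s : seq nat) :
  is_perm n (x :: s) -> is_perm n.-1 (del_letter x s).
Proof.
case/is_permP=> /= /andP[xs us] <- hm; apply/is_permP; split.
- rewrite map_inj_in_uniq // => a b ha hb.
  have /eqP na : a != x by apply: contraNneq xs => <-.
  have /eqP nb : b != x by apply: contraNneq xs => <-.
  by case: (ltnP x a); case: (ltnP x b) => /=; lia.
- by rewrite size_map.
- move=> y; apply/mapP/idP => [[z zs ->]|hy].
  + have /eqP nz : z != x by apply: contraNneq xs => <-.
    move: (hm z) (hm x); rewrite inE zs orbT inE eqxx => /esym hz /esym hx.
    by case: (ltnP x z) => /=; lia.
  + have := hm x; rewrite inE eqxx => /esym hx.
    have ne : y + (x <= y) != x by apply/eqP; case: (leqP x y) => /=; lia.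
    exists (y + (x <= y)); last by case: (leqP x y) => /=; lia.
    by move: (hm (y + (x <= y))); rewrite inE (negbTE ne) /= => ->; case: (leqP x y) => /=; lia.
Qed.

Lemma ins_letter_perm (n x : nat) (s : seq nat) : is_perm n.-1 s -> 0 < x <= n ->
  is_perm n (x :: ins_letter x s).
Proof.
case/is_permP=> us sz hm hx; apply/is_permP; split.
- rewrite /= map_inj_in_uniq ?us ?andbT.
  + by apply/mapP => -[y ys]; case: (leqP x y) => /=; lia.
  + by move=> a b _ _; case: (leqP x a); case: (leqP x b) => /=; lia.
- by rewrite /= size_map sz; lia.
- move=> y; rewrite inE; apply/orP/idP => [[/eqP -> //|/mapP[z zs ->]]|hy].
  + by move: (hm z); rewrite zs => /esym; case: (leqP x z) => /=; lia.
  + case: (eqVneq y x) => [->|nyx]; [by left | right].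
    apply/mapP; exists (y - (x < y)); last by case: (ltnP x y) => /=; move/eqP: nyx; lia.
    by rewrite hm; case: (ltnP x y) => /=; move/eqP: nyx; lia.
Qed.

Lemma occurrence_del (x : nat) (s : seq nat) (P : vpattern) (I : seq nat) :
  x \notin s -> occurrence (del_letter x s) P I = occurrence (x :: s) P (map S I).
Proof.
move=> xs; rewrite /occurrence sorted_map all_map !size_map /=.
case al: (all (fun i => i < size s) I) => //=.
have -> : red [seq nth 0 (del_letter x s) i | i <- I] =
          red [seq nth 0 (x :: s) i | i <- map S I].
  have -> : [seq nth 0 (del_letter x s) i | i <- I] =
            map (fun y => y - (x < y)) [seq nth 0 s i | i <- I].
    rewrite -map_comp; apply/eq_in_map => i iI /=.
    by rewrite (nth_map 0) //; apply: (allP al).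
  have -> : [seq nth 0 (x :: s) i | i <- map S I] = [seq nth 0 s i | i <- I].
    by rewrite -map_comp.
  apply: red_map_mono => _ _ /mapP[i iI ->] /mapP[j jI ->].
  have not_x k : k \in I -> nth 0 s k != x.
    by move=> kI; apply: contraNneq xs => <-; rewrite mem_nth // (allP al).
  move: (not_x i iI) (not_x j jI) => /eqP ? /eqP ?.
  by case: (ltnP x (nth 0 s i)); case: (ltnP x (nth 0 s j)) => /=; lia.
congr [&& _, _ & _]; apply: eq_all => y; case h: (0 < y < size I) => //=.
by rewrite !(nth_map 0) //; lia.
Qed.

Lemma avoids_single (P : vpattern) (pi : seq nat) : avoids [:: P] pi <-> ~ contains pi P.
Proof. by split=> [/(_ P (mem_head _ _))|nP Q]; rewrite // inE => /eqP ->. Qed.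

Lemma avoids_del (x : nat) (s : seq nat) (P : vpattern) :
  x \notin s -> 0 < size P.1 ->
  (forall I, occurrence (x :: s) P I -> nth 0 I 0 != 0) ->
  avoids [:: P] (x :: s) <-> avoids [:: P] (del_letter x s).
Proof.
move=> xs P_ne no_head; rewrite !avoids_single; split=> nP [I oc].
- by apply: nP; exists (map S I); rewrite -occurrence_del.
- case: I oc => [|i I'] oc.
    by case/and4P: oc => _ _ /eqP /(congr1 size); rewrite red_size /=; lia.
  have /= i_pos := no_head _ oc.
  apply: nP; exists (map predn (i :: I')); rewrite occurrence_del //.
  suff -> : map S (map predn (i :: I')) = i :: I' by [].
  case/and4P: oc => so _ _ _; rewrite -map_comp /=; congr cons; first lia.
  apply: map_id_in => j jI /=.
  by move: (allP (order_path_min ltn_trans so) j jI); lia.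
Qed.

Lemma sorted_letters (n : nat) (w : seq nat) : all (fun x => 0 < x <= n) w ->
  sorted leq (0 :: sort leq w ++ [:: n.+1]).
Proof.
move=> al /=; rewrite cat_path /= andbT; apply/andP; split.
- by have := sort_sorted leq_total w; case: (sort leq w) => //= z s ->; rewrite andbT.
- have : last 0 (sort leq w) \in 0 :: sort leq w by apply: mem_last.
  by rewrite inE => /orP[/eqP -> //|]; rewrite mem_sort => /(allP al); lia.
Qed.

Lemma count_ltn_sorted (c : seq nat) (i y : nat) : sorted leq c -> i.+1 < size c ->
  nth 0 c i < y < nth 0 c i.+1 -> count (fun z => z < y) c = i.+1.
Proof.
elim: c i => [|x c IH] [|i] //= so hi /andP[h1 h2].
- case: c so hi h2 {IH} => [|z c] //= /andP[xz pz] _ yz.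
  have -> : count (fun z0 => z0 < y) c = 0.
    apply/eqP; rewrite -leqn0 leqNgt -has_count; apply/hasPn => u uc /=.
    by move: (allP (order_path_min leq_trans pz) u uc); lia.
  by rewrite h1; lia.
- have xc : x <= nth 0 c i.
    by apply: (allP (order_path_min leq_trans so)); apply: mem_nth; exact: ltnW.
  by rewrite (IH i) ?(path_sorted so) ?h1 ?h2 //; lia.
Qed.

Lemma all2_nth (r : nat -> nat -> bool) (s1 s2 : seq nat) (i : nat) :
  all2 r s1 s2 -> i < size s1 -> r (nth 0 s1 i) (nth 0 s2 i).
Proof.
elim: s1 s2 i => [|a s1 IH] [|b s2] [|i] //= /andP[h1 h2] hi //.
exact: IH.
Qed.

Lemma positive_gap (n i : nat) (w : seq nat) : all (fun x => 0 < x <= n) w ->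
  i <= size w -> 0 < nth 0 (spacing n w) i ->
  exists y, [/\ 0 < y <= n, y \notin w & count (fun z => z < y) w = i].
Proof.
move=> al hi; rewrite /spacing (nth_map 0) ?size_iota // nth_iota // add0n.
set c := 0 :: _ => gap.
have so : sorted leq c by apply: sorted_letters.
have sc : size c = (size w).+2 by rewrite /c /= size_cat size_sort /= addn1.
have c_le z : z \in c -> z <= n.+1.
  by rewrite /c inE mem_cat mem_sort inE => /or3P[/eqP->|/(allP al)|/eqP->]; lia.
have bn : nth 0 c i.+1 <= n.+1 by apply: c_le; rewrite mem_nth // sc.
set y := (nth 0 c i).+1.
have cy : count (fun z => z < y) c = i.+1 by apply: count_ltn_sorted; rewrite ?sc //; lia.
exists y; split.
- by rewrite /y; lia.
- apply/negP => yw.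
  have yc : y \in c by rewrite /c inE mem_cat mem_sort yw orbT.
  have ji : index y c < size c by rewrite index_mem.
  have := nth_index 0 yc; have lq := sorted_leq_nth leq_trans leqnn 0 so.
  case: (leqP (index y c) i) => h.
  + by have := lq _ i ji ltac:(rewrite inE sc; lia) h => /[swap] ->; rewrite /y; lia.
  + by have := lq i.+1 _ ltac:(rewrite inE sc; lia) ji h => /[swap] ->; rewrite /y; lia.
- move: cy; rewrite /c /= count_cat /= addn0 (permP (permEl (perm_sort leq w))).
  have -> : (n.+1 < y) = false by apply/negbTE; rewrite -leqNgt /y; lia.
  by rewrite addn0 add1n => -[].
Qed.

Section PrefixPattern.

Variables (k : nat) (sigma : seq nat).
Hypotheses (k_gt0 : 0 < k) (sigma_perm : is_perm k.+1 sigma).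

Local Notation pat := (sigma, iota 1 k.-1).
Local Notation p := (red (take k sigma)).
Local Notation last_letter := (nth 0 sigma k).

Lemma size_sigma : size sigma = k.+1.
Proof. by case/is_permP: sigma_perm. Qed.

Lemma size_prefix : size p = k.
Proof. by rewrite red_size size_takel // size_sigma. Qed.

Lemma completes_sigma (w : seq nat) (y : nat) : red w = p -> y \notin w ->
  count (fun z => z < y) w = last_letter.-1 -> red (rcons w y) = sigma.
Proof.
have sigma_split : sigma = rcons (take k sigma) last_letter.
  by rewrite -take_nth ?size_sigma // take_oversize // size_sigma.
have [sigma_uniq _ sigma_mem] := (is_permP _ _).1 sigma_perm.
move=> rw yw cy; rewrite -[RHS](red_perm sigma_perm) [in RHS]sigma_split.
apply: red_rcons_eq => //.
- by move: sigma_uniq; rewrite {1}sigma_split rcons_uniq => /andP[].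
- have last_range : 0 < last_letter <= k.+1 by rewrite -sigma_mem mem_nth // size_sigma.
  have := count_ltn_perm (x := last_letter) sigma_perm ltac:(lia).
  by rewrite [X in count _ X = _]sigma_split count_rcons ltnn addn0 cy.
Qed.

(* Gap vector: if the gap of g(n,w) below sigma_t is nonempty, a missing
   letter there completes the prefix to a head occurrence of the pattern. *)
Lemma prefix_gap_vector :
  gap_vector [:: pat] p [seq nat_of_bool (i == last_letter) | i <- iota 1 k.+1].
Proof.
split; first by rewrite size_map size_iota size_prefix.
move=> n w /and4P[/eqP sw _ aw /eqP rw] hv pi [pp /avoids_single pa pt].
rewrite size_prefix in sw; rewrite sw in pt.
have last_range : 0 < last_letter <= k.+1.
  by have [_ _ <-] := (is_permP _ _).1 sigma_perm; rewrite mem_nth // size_sigma.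
have v_at : nth 0 [seq nat_of_bool (i == last_letter) | i <- iota 1 k.+1]
                 last_letter.-1 = 1.
  rewrite (nth_map 0) ?size_iota; last lia.
  rewrite nth_iota; last lia.
  by rewrite add1n prednK ?eqxx //; case/andP: last_range.
have gap : 0 < nth 0 (spacing n w) last_letter.-1.
  rewrite -v_at; apply: all2_nth hv _.
  by rewrite /spacing size_map size_iota sw; lia.
have [y [hy yw cy]] := positive_gap aw (i := last_letter.-1) ltac:(rewrite sw; lia) gap.
apply: pa; have [I oc _] : exists2 I, occurrence pi pat I & nth 0 I 0 = 0.
  apply/(head_occurrenceP k_gt0 size_sigma pp); exists y.
  by rewrite pt; split => //; apply: completes_sigma.
by exists I.
Qed.

(* If one permutation with prefix w avoids the pattern, then no letter
   completes w to a copy of sigma, so no permutation with prefix w has an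
   occurrence through its first position. *)
Lemma no_head_occurrence (n : nat) (w pi0 pi I : seq nat) :
  size w = k -> SB n [:: pat] w pi0 -> is_perm n pi -> take k pi = w ->
  occurrence pi pat I -> nth 0 I 0 != 0.
Proof.
move=> sw [pp0 /avoids_single pa0 pt0] pp pt oc; apply/eqP => h0.
rewrite sw in pt0.
have [y [hy yw hr]] := (head_occurrenceP k_gt0 size_sigma pp).1 (ex_intro2 _ _ I oc h0).
have [I0 oc0 _] : exists2 I0, occurrence pi0 pat I0 & nth 0 I0 0 = 0.
  by apply/(head_occurrenceP k_gt0 size_sigma pp0); exists y; rewrite pt0 -pt.
by apply: pa0; exists I0.
Qed.

Lemma take_cons_prefix (x : nat) (w pi : seq nat) :
  take (size (x :: w)) pi = x :: w -> exists2 s, pi = x :: s & take (size w) s = w.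
Proof. by case: pi => [|y s] //= [-> pt]; exists s. Qed.

(* Reversible deletion of the first entry: deleting the first letter x of a
   permutation with prefix x :: w is undone by [ins_letter x], and preserves
   avoidance in both directions because no occurrence uses position 1. *)
Lemma prefix_deletable : reversibly_deletable [:: pat] p [:: 1].
Proof.
split=> // n w /and4P[/eqP sw uw aw _] [pi0 pi0_in].
rewrite size_prefix in sw.
have no_head := no_head_occurrence sw pi0_in.
have pat_ne : 0 < size pat.1 by rewrite size_sigma.
case: w sw uw aw pi0_in no_head => [|x w] sw; first by move: k_gt0; rewrite -sw.
move=> /= /andP[xw _] /andP[x_range _] _ no_head.
have take_w (s : seq nat) : take k (x :: s) = x :: take (size w) s.
  by rewrite -sw.
rewrite !dR_first subn1; split.
- move=> pi [pp pa /take_cons_prefix [s epi pt]]; subst pi; rewrite dR_first.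
  have [/= /andP[xs _] _ _] := (is_permP _ _).1 pp.
  split; first exact: del_letter_perm.
  + by apply/(avoids_del xs pat_ne) => // I; apply: no_head; rewrite ?take_w ?pt.
  + by rewrite size_map -map_take pt.
- move=> pi1 pi2 [pp1 _ /take_cons_prefix [s1 e1 _]] [pp2 _ /take_cons_prefix [s2 e2 _]].
  subst pi1 pi2.
  have [/= /andP[xs1 _] _ _] := (is_permP _ _).1 pp1.
  have [/= /andP[xs2 _] _ _] := (is_permP _ _).1 pp2.
  by rewrite !dR_first => e; rewrite -(ins_delK xs1) e ins_delK.
- move=> s' [pp' pa' pt']; rewrite size_map in pt'.
  have pp : is_perm n (x :: ins_letter x s') by apply: ins_letter_perm.
  have [/= /andP[xs _] _ _] := (is_permP _ _).1 pp.
  have pt : take (size w) (ins_letter x s') = w by rewrite -map_take pt'; exact: ins_delK.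
  exists (x :: ins_letter x s'); rewrite dR_first del_insK; split=> //.
  split=> //; last by rewrite /= pt.
  apply/(avoids_del xs pat_ne); last by rewrite del_insK.
  by move=> I; apply: no_head; rewrite ?take_w ?pt.
Qed.

End PrefixPattern.

Theorem mainTheorem6 (t : nat) (sigma : seq nat) :
  2 <= t -> is_perm t sigma ->
  let p := red (take t.-1 sigma) in
  let v := [seq nat_of_bool (i == nth 0 sigma t.-1) | i <- iota 1 t] in
  let B := [:: (sigma, iota 1 (t - 2))] in
  gap_vector B p v /\ reversibly_deletable B p [:: 1].
Proof.
case: t => [//|k] k_gt0 sigma_perm /=.
have -> : k.+1 - 2 = k.-1 by rewrite subSS subn1.
split; [exact: prefix_gap_vector | exact: prefix_deletable].
Qed.
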